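(* Let $L$ be a torsion-free $d$-dimensional Lie algebra over $\mathbb{C}[\![t]\!]$ and $*\in\{\le,\triangleleft\}$. Assume $L$ has a basis $B=\{x_1,\ldots,x_d\}$ which is nice with respect to $*$ and simple. Then $$R_L^*(T)=\sum_{\mathbf{n}\in\mathcal{C}_B^*\cap\mathbb{Z}^d}T^{n_1+n_2+\cdots+n_d},$$ where $\mathcal{C}_B^{\triangleleft}=\{\mathbf{y}\in\mathbb{R}_{\ge0}^d: y_l\le y_i \text{ and } y_l\le y_j \text{ whenever } [x_i,x_j]=ax_l,\ a\ne0\}$ and $\mathcal{C}_B^{\le}=\{\mathbf{y}\in\mathbb{R}_{\ge0}^d: y_l\le y_i+y_j \text{ whenever } [x_i,x_j]=ax_l,\ a\ne0\}$.
   Context: Reduced zeta function: with $\chi$ the Euler characteristic on complex constructible sets (unique integer-valued function with $\chi(\mathbb{C}^m)=1$, additive on disjoint constructible sets, multiplicative along constructible maps with fibres of constant Euler characteristic), and $B_n^{\le}$ (resp. $B_n^{\triangleleft}$) the constructible subset of the Grassmannian $\mathrm{Gr}(L/t^nL)$ of $\mathbb{C}[\![t]\!]$-submodules of $L$ of $\mathbb{C}$-codimension $n$ that are subalgebras (resp. ideals), $R_L^*(T)=\sum_{n\ge0}\chi(B_n^* )T^n$. Let $v$ be the $t$-adic valuation on $\mathbb{C}[\![t]\!]$. Let $\mathcal{D}_B^*$ be the set of $\mathbf{n}\in\mathbb{Z}_{\ge0}^d$ such that the $\mathbb{C}[\![t]\!]$-span of $t^{n_1}x_1,\ldots,t^{n_d}x_d$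 is an ideal (if $*=\triangleleft$) or a subalgebra (if $*=\le$). The basis $B$ is nice with respect to $*$ if $R_L^*(T)=\sum_{\mathbf{n}\in\mathcal{D}_B^*}T^{n_1+\cdots+n_d}$. It is simple if for all $i,j$ there exist $l\in\{1,\ldots,d\}$ and $a\in\mathbb{C}[\![t]\!]$ with $[x_i,x_j]=ax_l$ and either $a=0$ or $v(a)=0$. *)

From HB Require Import structures.
From mathcomp Require Import all_boot all_order all_algebra.
From mathcomp Require Import complex.
From mathcomp Require Import boolp.
From mathcomp Require Import Rstruct.
Set Implicit Arguments. Unset Strict Implicit. Unset Printing Implicit Defensive.
Import Order.TTheory GRing.Theory Num.Theory.
Local Open Scope ring_scope.

Definition CC : Type := complex Rdefinitions.R.

(** Formal power series C[[t]] : coefficient sequences. *)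
Definition PS : Type := nat -> CC.

Definition ps0 : PS := fun _ => 0.
Definition ps1 : PS := fun m => if m == 0%N then 1 else 0.
Definition addps (f g : PS) : PS := fun m => f m + g m.
Definition oppps (f : PS) : PS := fun m => - f m.
Definition mulps (f g : PS) : PS :=
  fun m => \sum_(k < m.+1) f k * g (m - k)%N.
Definition tpow (n : nat) : PS := fun m => if m == n then 1 else 0.
(** v(a) = 0 for the t-adic valuation, i.e. a has nonzero constant term *)
Definition val_is_zero (a : PS) : Prop := a 0%N <> 0.

(** A free C[[t]]-Lie algebra of rank d with basis x_1..x_d is given by its
    structure constants: [x_i, x_j] = \sum_k c i j k x_k.
    Elements of L are coordinate vectors 'I_d -> PS. *)
Definition Lvec (d : nat) : Type := 'I_d -> PS.

Definition basis_vec (d : nat) (i : 'I_d) : Lvec d :=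
  fun k => if k == i then ps1 else ps0.

Definition br (d : nat) (c : 'I_d -> 'I_d -> 'I_d -> PS) (v w : Lvec d) : Lvec d :=
  fun l m => \sum_(i < d) \sum_(j < d) mulps (mulps (v i) (w j)) (c i j l) m.

(** Lie algebra axioms (alternating bilinear bracket + Jacobi identity),
    expressed on the basis (equivalent by (tri)linearity). *)
Definition is_lie (d : nat) (c : 'I_d -> 'I_d -> 'I_d -> PS) : Prop :=
  [/\ (forall i k, c i i k = ps0),
      (forall i j k, c i j k = oppps (c j i k)) &
      (forall i j k l,
         (fun m => \sum_(p < d)
             (mulps (c i j p) (c p k l) m + mulps (c j k p) (c p i l) m
              + mulps (c k i p) (c p j l) m)) = ps0)].

Definition bracket_is (d : nat) (c : 'I_d -> 'I_d -> 'I_d -> PS)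
  (i j l : 'I_d) (a : PS) : Prop :=
  forall k, c i j k = if k == l then a else ps0.

Definition simple_basis (d : nat) (c : 'I_d -> 'I_d -> 'I_d -> PS) : Prop :=
  forall i j, exists l, exists a, bracket_is c i j l a /\ (a = ps0 \/ val_is_zero a).

Inductive kind := Subalg | Ideal.

Definition in_span (d : nat) (n : 'I_d -> nat) (v : Lvec d) : Prop :=
  exists a : 'I_d -> PS, v = fun k => mulps (a k) (tpow (n k)).

Definition is_star (d : nat) (c : 'I_d -> 'I_d -> 'I_d -> PS) (star : kind)
  (n : 'I_d -> nat) : Prop :=
  match star with
  | Subalg => forall v w, in_span n v -> in_span n w -> in_span n (br c v w)
  | Ideal => forall v w, in_span n w -> in_span n (br c v w)
  end.

Definition D_B (d : nat) (c : 'I_d -> 'I_d -> 'I_d -> PS) (star : kind)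
  (n : 'I_d -> nat) : Prop := is_star c star n.

(** Coefficient of T^m in \sum_{n in S} T^{n_1+...+n_d}, S a set of
    nonnegative integer vectors: the number of n in S with |n| = m. *)
Definition gcoeff (d : nat) (S : ('I_d -> nat) -> Prop) (m : nat) : nat :=
  #|[set n : {ffun 'I_d -> 'I_m.+1} |
      ((\sum_(i < d) (n i : nat))%N == m) && `[< S (fun i => nat_of_ord (n i)) >]]|.

(** Nice basis: R^*_L(T) = \sum_{n in D_B^*} T^{|n|}, where R is the
    coefficient sequence of R^*_L(T). *)
Definition nice (d : nat) (c : 'I_d -> 'I_d -> 'I_d -> PS) (star : kind)
  (Rcoef : nat -> int) : Prop :=
  forall m, Rcoef m = (gcoeff (D_B c star) m)%:Z.

Definition C_B (d : nat) (c : 'I_d -> 'I_d -> 'I_d -> PS) (star : kind)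
  (y : 'I_d -> Rdefinitions.R) : Prop :=
  (forall k, 0 <= y k) /\
  forall i j l a, bracket_is c i j l a -> a <> ps0 ->
    match star with
    | Ideal => (y l <= y i) && (y l <= y j)
    | Subalg => y l <= y i + y j
    end.

(* For a simple basis every nonzero structure constant c_ijl is a unit of
   C[[t]], so [t^p x_i, t^q x_j] has t-adic valuation exactly p + q in the
   x_l-coordinate.  Testing the span of the t^(n_k) x_k on such brackets shows
   that its being a subalgebra (ideal) is equivalent to the inequalities
   defining the cone C_B^*, i.e. D_B^* = C_B^* ∩ Z^d; niceness of B then gives
   the formula for R_L^*(T). *)
From mathcomp Require Import all_boot all_order all_algebra.
From mathcomp Require Import Rstruct.
From mathcomp Require Import complex boolp zify.
Import Order.TTheory GRing.Theory Num.Theory.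
Set Implicit Arguments. Unset Strict Implicit.
Local Open Scope ring_scope.

Arguments mulps : simpl never.
Arguments tpow : simpl never.
Arguments ps0 : simpl never.

Definition val_ge (f : PS) (n : nat) : Prop := forall m, (m < n)%N -> f m = 0.

Lemma val_ge_le f p q : val_ge f p -> (q <= p)%N -> val_ge f q.
Proof. by move=> hf le_qp m lt_mq; apply: hf; apply: leq_trans lt_mq le_qp. Qed.

Lemma val_ge0 f : val_ge f 0.
Proof. by move=> m; rewrite ltn0. Qed.

Lemma val_ge_tpow p : val_ge (tpow p) p.
Proof. by move=> m lt_mp; rewrite /tpow ifN // neq_ltn lt_mp. Qed.

Lemma val_ge_mul f g p q : val_ge f p -> val_ge g q -> val_ge (mulps f g) (p + q).
Proof.
move=> hf hg m lt_m; rewrite /mulps; apply: big1 => k _.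
case: (ltnP k p) => kp; first by rewrite hf // mul0r.
by rewrite hg ?mulr0 //; have := ltn_ord k; lia.
Qed.

Lemma mulps_lead f g p q :
  val_ge f p -> val_ge g q -> mulps f g (p + q)%N = f p * g q.
Proof.
move=> hf hg; rewrite /mulps.
have hp : (p < (p + q).+1)%N by lia.
rewrite (bigD1 (Ordinal hp)) //= addKn big1 ?addr0 // => k.
rewrite -val_eqE /= => /eqP k_neq_p.
case: (ltnP k p) => kp; first by rewrite hf // mul0r.
by rewrite hg ?mulr0 //; have := ltn_ord k; lia.
Qed.

Lemma mul0ps f : mulps ps0 f = ps0.
Proof. by apply: funext => m; rewrite /mulps big1 // => k _; rewrite mul0r. Qed.

Lemma mulps0 f : mulps f ps0 = ps0.
Proof. by apply: funext => m; rewrite /mulps big1 // => k _; rewrite mulr0. Qed.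

Lemma tpow_divides f n : val_ge f n -> f = mulps (fun k => f (k + n)%N) (tpow n).
Proof.
move=> hf; apply: funext => m; rewrite /mulps.
case: (ltnP m n) => mn.
  by rewrite hf // big1 // => k _; rewrite /tpow ifN ?mulr0 //; have := ltn_ord k; lia.
have hk : (m - n < m.+1)%N by lia.
rewrite (bigD1 (Ordinal hk)) //= big1 ?addr0.
  by rewrite /tpow subKn // eqxx mulr1 subnK.
move=> k; rewrite -val_eqE /= => k_neq.
by rewrite /tpow ifN ?mulr0 //; have := ltn_ord k; lia.
Qed.

Lemma tpowM_coef p q (a : PS) : mulps (mulps (tpow p) (tpow q)) a (p + q)%N = a 0%N.
Proof.
rewrite -[(p + q)%N]addn0 (mulps_lead (val_ge_mul (@val_ge_tpow p) (@val_ge_tpow q))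
  (@val_ge0 a)).
by rewrite (mulps_lead (@val_ge_tpow p) (@val_ge_tpow q)) /tpow !eqxx !mul1r.
Qed.

Lemma in_spanP d (n : 'I_d -> nat) v : in_span n v <-> forall k, val_ge (v k) (n k).
Proof.
split=> [[a ->] k | hv].
  by rewrite -[n k]add0n; apply: val_ge_mul; [exact: val_ge0 | exact: val_ge_tpow].
by exists (fun k m => v k (m + n k)%N); apply: funext => k; apply: tpow_divides.
Qed.

Section Bracket.

Variables (d : nat) (c : 'I_d -> 'I_d -> 'I_d -> PS).

Lemma simple_bracket_unit : simple_basis c -> forall i j l,
  c i j l <> ps0 -> bracket_is c i j l (c i j l) /\ val_is_zero (c i j l).
Proof.
move=> hs i j l c_neq0; have [l' [a [hb ha]]] := hs i j.
case: (eqVneq l' l) => [e | neq]; last by case: c_neq0; rewrite hb eq_sym (negPf neq).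
subst l'.
have cE : c i j l = a by rewrite hb eqxx.
rewrite cE; split; first by move=> k; rewrite hb.
by case: ha => // a0; case: c_neq0; rewrite cE a0.
Qed.

Lemma bracket_is_coef i j l a : bracket_is c i j l a -> c i j l = a.
Proof. by move=> hb; rewrite hb eqxx. Qed.

Definition tbasis (i : 'I_d) (p : nat) : Lvec d :=
  fun k => if k == i then tpow p else ps0.

Lemma tbasis_in_span (n : 'I_d -> nat) i : in_span n (tbasis i (n i)).
Proof.
apply/in_spanP => k; rewrite /tbasis; case: eqP => [->|_]; first exact: val_ge_tpow.
by move=> m _.
Qed.

Lemma br_tbasis i j p q l :
  br c (tbasis i p) (tbasis j q) l = mulps (mulps (tpow p) (tpow q)) (c i j l).
Proof.
apply: funext => m; rewrite /br; cbv beta.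
rewrite (bigD1 i) //= addrC big1 => [|i' ne]; last first.
  by apply: big1 => j' _; rewrite /tbasis (negbTE ne) !mul0ps.
rewrite add0r (bigD1 j) //= addrC big1 => [|j' ne]; last first.
  by rewrite /tbasis (negbTE ne) mulps0 mul0ps.
by rewrite add0r /tbasis !eqxx.
Qed.

Lemma span_br_tbasis (n : 'I_d -> nat) i j l p q :
  in_span n (br c (tbasis i p) (tbasis j q)) -> val_is_zero (c i j l) ->
  (n l <= p + q)%N.
Proof.
move=> /in_spanP hspan hunit; rewrite leqNgt; apply/negP => lt_pq.
by apply: hunit; have := hspan l (p + q)%N lt_pq; rewrite br_tbasis tpowM_coef.
Qed.

Lemma br_in_span (n pv qw : 'I_d -> nat) v w :
  (forall k, val_ge (v k) (pv k)) -> (forall k, val_ge (w k) (qw k)) ->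
  (forall i j l, c i j l <> ps0 -> (n l <= pv i + qw j)%N) ->
  in_span n (br c v w).
Proof.
move=> hv hw hc; apply/in_spanP => l m lt_m.
apply: big1 => i _; apply: big1 => j _.
have [->|c_neq0] := EM (c i j l = ps0); first by rewrite mulps0.
have hge := val_ge_mul (val_ge_mul (hv i) (hw j)) (@val_ge0 (c i j l)).
apply: (val_ge_le hge) lt_m; rewrite addn0; exact: hc.
Qed.

End Bracket.

Section Cone.

Variables (d : nat) (c : 'I_d -> 'I_d -> 'I_d -> PS).
Hypotheses (hlie : is_lie c) (hsimple : simple_basis c).

Lemma C_B_of_D_B star (n : 'I_d -> nat) :
  D_B c star n -> C_B c star (fun k => (n k)%:R).
Proof.
move=> hD; split=> [k|i j l a hb a_neq0]; first exact: ler0n.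
have cE := bracket_is_coef hb; rewrite -cE in a_neq0.
have [_ hunit] := simple_bracket_unit hsimple a_neq0.
case: star hD => hD.
  rewrite -natrD ler_nat; apply: (span_br_tbasis (i:=i) (j:=j)) hunit.
  by apply: hD; apply: tbasis_in_span.
have [_ hanti _] := hlie.
have hunit' : val_is_zero (c j i l).
  by rewrite hanti /val_is_zero /oppps => /eqP; rewrite oppr_eq0 => /eqP.
rewrite !ler_nat -[n i]add0n -[n j]add0n.
apply/andP; split.
  by apply: (span_br_tbasis (i:=j) (j:=i)) hunit'; apply: hD; apply: tbasis_in_span.
by apply: (span_br_tbasis (i:=i) (j:=j)) hunit; apply: hD; apply: tbasis_in_span.
Qed.

Lemma D_B_of_C_B star (n : 'I_d -> nat) :
  C_B c star (fun k => (n k)%:R) -> D_B c star n.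
Proof.
move=> [_ hC]; case: star hC => hC /=.
  move=> v w /in_spanP hv /in_spanP hw; apply: (br_in_span hv hw) => i j l c_neq0.
  have [hb _] := simple_bracket_unit hsimple c_neq0.
  by rewrite -(ler_nat Rdefinitions.R) natrD; apply: hC hb c_neq0.
move=> v w /in_spanP hw; apply: (br_in_span (pv := fun=> 0%N) (fun k => @val_ge0 (v k)) hw).
move=> i j l c_neq0; have [hb _] := simple_bracket_unit hsimple c_neq0.
by have /andP[_] := hC i j l _ hb c_neq0; rewrite ler_nat.
Qed.

End Cone.

Theorem proposition4p1 (d : nat) (c : 'I_d -> 'I_d -> 'I_d -> PS) (star : kind)
  (Rcoef : nat -> int) :
  is_lie c -> simple_basis c -> nice c star Rcoef ->
  forall m : nat,
    Rcoef m = (gcoeff (fun n : 'I_d -> nat => C_B c star (fun k => (n k)%:R)) m)%:Z.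
Proof.
move=> hlie hsimple hnice m.
have -> : (fun n : 'I_d -> nat => C_B c star (fun k => (n k)%:R)) = D_B c star.
  apply: funext => n; apply: propext; split.
    exact: D_B_of_C_B.
  exact: C_B_of_D_B.
exact: hnice.
Qed.
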